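(* Let $f,g\colon\mathbb{R}^3\to\mathbb{R}$ be continuous (globally Lipschitz) with $|f(x,y,z)|,|g(x,y,z)|<M$ everywhere, let $\varepsilon>0$, and consider solutions $(x(t),y(t),z(t))$ of \[ \dot x = f(x,y,z),\qquad \dot y = g(x,y,z),\qquad \varepsilon\dot z = x+|z|. \] Then the sets $\{z>-x+M\varepsilon\}$ and $\{z>x-M\varepsilon\}$ are forward invariant: once a trajectory enters one of them, it stays in it for all later times. In particular, if a solution satisfies $x(\tau)<0$ and $z(\tau)=0$, then $z(t)>x(t)-M\varepsilon$ for all $t\ge\tau$, and if moreover $z(t_0)>-x(t_0)+M\varepsilon$ for some $t_0\ge\tau$, then $z(t)>0$ for all $t\ge t_0$. *)

From Stdlib Require Import Reals Lra.
Open Scope R_scope.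

Definition dist3 (x1 y1 z1 x2 y2 z2 : R) : R :=
  sqrt ((x1 - x2)^2 + (y1 - y2)^2 + (z1 - z2)^2).

Definition lipschitz3 (h : R -> R -> R -> R) : Prop :=
  exists L : R, 0 <= L /\
    forall x1 y1 z1 x2 y2 z2,
      Rabs (h x1 y1 z1 - h x2 y2 z2) <= L * dist3 x1 y1 z1 x2 y2 z2.

Definition is_solution (f g : R -> R -> R -> R) (eps : R)
  (x y z : R -> R) : Prop :=
  forall t : R,
    derivable_pt_lim x t (f (x t) (y t) (z t)) /\
    derivable_pt_lim y t (g (x t) (y t) (z t)) /\
    derivable_pt_lim z t ((x t + Rabs (z t)) / eps).

(* Both barrier functions [w = z + x - M eps] and [w = z - x + M eps] satisfy a
   differential inequality [w' > c w] with [c = 1/eps] resp. [c = -1/eps]: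
   using [|z| >= z] resp. [|z| >= -z] and [|f| < M] in the equation for [z'],
   the [M eps] shift absorbs the drift of [x].  Hence [w e^(-c t)] is strictly
   increasing and [w] cannot lose positivity.  For the consequences, [x(tau) < 0 = z(tau)]
   puts the trajectory in [{z > x - M eps}] at time [tau], and the two barriers
   together give [2 z > 0]. *)

From Stdlib Require Import Reals Lra.
Open Scope R_scope.

Lemma strict_increasing_of_deriv_pos (v dv : R -> R) :
  (forall t, derivable_pt_lim v t (dv t)) -> (forall t, 0 < dv t) ->
  strict_increasing v.
Proof.
  intros v_dv dv_pos.
  exact (positive_derivative v (fun t => exist _ (dv t) (v_dv t)) dv_pos).
Qed.

Lemma pos_preserved_of_deriv_gt_scal (u du : R -> R) (c : R) :
  (forall t, derivable_pt_lim u t (du t)) -> (forall t, c * u t < du t) ->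
  forall a b, a <= b -> 0 < u a -> 0 < u b.
Proof.
  intros u_du du_gt a b ab ua_pos.
  set (v := fun t => u t * exp (- c * t)).
  assert (v_deriv : forall t,
            derivable_pt_lim v t ((du t - c * u t) * exp (- c * t))).
  { intro t.
    assert (lin : derivable_pt_lim (fun s => - c * s) t (- c * 1)).
    { apply derivable_pt_lim_scal, derivable_pt_lim_id. }
    pose proof (derivable_pt_lim_comp _ exp t _ _ lin
                  (derivable_pt_lim_exp (- c * t))) as e_deriv.
    pose proof (derivable_pt_lim_mult _ _ _ _ _ (u_du t) e_deriv) as prod.
    replace ((du t - c * u t) * exp (- c * t))
      with (du t * exp (- c * t) + u t * (exp (- c * t) * (- c * 1))) by ring.
    exact prod. }
  assert (v_incr : strict_increasing v).
  { apply (strict_increasing_of_deriv_pos v _ v_deriv); intro t.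
    apply Rmult_lt_0_compat; [specialize (du_gt t); lra | apply exp_pos]. }
  assert (va_pos : 0 < v a) by (apply Rmult_lt_0_compat; [exact ua_pos | apply exp_pos]).
  assert (vb_pos : 0 < v b).
  { destruct (Rle_lt_or_eq_dec _ _ ab) as [ab_lt | <-]; [|exact va_pos].
    exact (Rlt_trans _ _ _ va_pos (v_incr _ _ ab_lt)). }
  pose proof (exp_pos (- c * b)).
  unfold v in vb_pos; nra.
Qed.

Section Barriers.

Variables (f g : R -> R -> R -> R) (M eps : R) (x y z : R -> R).
Hypothesis f_bound : forall a b c, Rabs (f a b c) < M.
Hypothesis eps_pos : 0 < eps.
Hypothesis sol : is_solution f g eps x y z.

Lemma bound_pos : 0 < M.
Proof. pose proof (f_bound 0 0 0); pose proof (Rabs_pos (f 0 0 0)); lra. Qed.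

Lemma upper_barrier_invariant t0 t :
  t0 <= t -> z t0 > - x t0 + M * eps -> z t > - x t + M * eps.
Proof.
  intros t0t w0_pos.
  enough (0 < z t + x t - M * eps) by lra.
  apply (pos_preserved_of_deriv_gt_scal (fun s => z s + x s - M * eps)
           (fun s => (x s + Rabs (z s)) / eps + f (x s) (y s) (z s)) (/ eps))
    with t0; [| | exact t0t | lra].
  - intro s; destruct (sol s) as [x_d [_ z_d]].
    pose proof (derivable_pt_lim_minus _ _ _ _ _
                  (derivable_pt_lim_plus _ _ _ _ _ z_d x_d)
                  (derivable_pt_lim_const (M * eps) s)) as w_d.
    rewrite Rminus_0_r in w_d; exact w_d.
  - intro s.
    pose proof (Rabs_def2 _ _ (f_bound (x s) (y s) (z s))).
    pose proof (Rle_abs (z s)).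
    assert (/ eps * (z s + x s - M * eps) = (z s + x s) / eps - M)
      as -> by (field; lra).
    assert ((z s + x s) / eps <= (x s + Rabs (z s)) / eps).
    { apply Rmult_le_compat_r; [apply Rlt_le, Rinv_0_lt_compat|]; lra. }
    lra.
Qed.

Lemma lower_barrier_invariant t0 t :
  t0 <= t -> z t0 > x t0 - M * eps -> z t > x t - M * eps.
Proof.
  intros t0t w0_pos.
  enough (0 < z t - x t + M * eps) by lra.
  apply (pos_preserved_of_deriv_gt_scal (fun s => z s - x s + M * eps)
           (fun s => (x s + Rabs (z s)) / eps - f (x s) (y s) (z s)) (- / eps))
    with t0; [| | exact t0t | lra].
  - intro s; destruct (sol s) as [x_d [_ z_d]].
    pose proof (derivable_pt_lim_plus _ _ _ _ _
                  (derivable_pt_lim_minus _ _ _ _ _ z_d x_d)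
                  (derivable_pt_lim_const (M * eps) s)) as w_d.
    rewrite Rplus_0_r in w_d; exact w_d.
  - intro s.
    pose proof (Rabs_def2 _ _ (f_bound (x s) (y s) (z s))).
    pose proof (Rle_abs (- z s)); rewrite Rabs_Ropp in *.
    assert (- / eps * (z s - x s + M * eps) = (x s - z s) / eps - M)
      as -> by (field; lra).
    assert ((x s - z s) / eps <= (x s + Rabs (z s)) / eps).
    { apply Rmult_le_compat_r; [apply Rlt_le, Rinv_0_lt_compat|]; lra. }
    lra.
Qed.

End Barriers.

Theorem proposition1 (f g : R -> R -> R -> R) (M eps : R)
  (x y z : R -> R)
  (hf : lipschitz3 f) (hg : lipschitz3 g)
  (hfM : forall a b c, Rabs (f a b c) < M)
  (hgM : forall a b c, Rabs (g a b c) < M)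
  (heps : 0 < eps)
  (hsol : is_solution f g eps x y z) :
  (forall t0 t, t0 <= t -> z t0 > - x t0 + M * eps -> z t > - x t + M * eps) /\
  (forall t0 t, t0 <= t -> z t0 > x t0 - M * eps -> z t > x t - M * eps) /\
  (forall tau, x tau < 0 -> z tau = 0 ->
     (forall t, tau <= t -> z t > x t - M * eps) /\
     (forall t0, tau <= t0 -> z t0 > - x t0 + M * eps ->
        forall t, t0 <= t -> z t > 0)).
Proof.
  pose proof (upper_barrier_invariant f g M eps x y z hfM heps hsol) as upper.
  pose proof (lower_barrier_invariant f g M eps x y z hfM heps hsol) as lower.
  split; [exact upper | split; [exact lower |]].
  intros tau x_neg z_zero.
  assert (lower_tau : forall t, tau <= t -> z t > x t - M * eps).
  { intros t tau_t; apply lower with tau; [exact tau_t|].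
    pose proof (bound_pos f M hfM); rewrite z_zero; nra. }
  split; [exact lower_tau|].
  intros t0 tau_t0 upper_t0 t t0_t.
  pose proof (upper _ _ t0_t upper_t0); pose proof (lower_tau t ltac:(lra)); lra.
Qed.
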